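(* Let $F$ be an infinite field, $n=2$, and let $f=[z,a_1y_1,\dots,a_ny_n]$ and $g=[z,a'_1y_1,\dots,a'_my_m]$ be elements of $\mathcal{B}=\{[z,a_1y_1,\dots,a_ny_n]\mid n\ge1,\ a_i>0\}$. If $V_f\le V_g$, then $g\in\langle\{f\}\cup I\rangle_{T_{\mathbb{Z}_2}}$.
   Context: $UT_2(F)^{(-)}$ is the Lie algebra of $2\times2$ upper triangular matrices with bracket $[a,b]=ab-ba$ and canonical $\mathbb{Z}_2$-grading ($e_{11},e_{22}$ of degree $0$, $e_{12}$ of degree $1$); $I$ is its $T_{\mathbb{Z}_2}$-ideal of graded identities in the free Lie algebra on variables $y_i$ of degree $0$ and $z_i$ of degree $1$; $z$ is a variable of degree $1$. Commutators are left normed and $[z,a_1y_1,\dots,a_ny_n]$ denotes $[z,y_1,\dots,y_1,\dots,y_n,\dots,y_n]$ with $y_i$ repeated $a_i$ times. $\langle S\rangle_{T_{\mathbb{Z}_2}}$ is the $T_{\mathbb{Z}_2}$-ideal generated by $S$. For $f=[z,a_1y_1,\dots,a_ny_n]$ put $V_f=(a_1,\dots,a_n)$. For finite sequences of positive integers, $(a_1,\dots,a_n)\le(a'_1,\dots,a'_m)$ means there is a strictly increasing map $\varphi:\{1,\dots,n\}\to\{1,\dots,m\}$ with $a_i\le a'_{\varphi(i)}$ for all $i$. *)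

From mathcomp Require Import all_boot all_algebra.
Set Implicit Arguments. Unset Strict Implicit. Unset Printing Implicit Defensive.
Import GRing.Theory.
Local Open Scope ring_scope.

(* Terms of the free (nonassociative) algebra over F on variables
   y_i (degree 0) and z_i (degree 1).  The free Lie algebra L is the
   quotient of these terms by [lequiv] below. *)
Inductive lterm (F : Type) : Type :=
| LY of nat
| LZ of nat
| L0
| LAdd of lterm F & lterm F
| LScale of F & lterm F
| LBr of lterm F & lterm F.

Arguments LY {F}. Arguments LZ {F}. Arguments L0 {F}.

Section Lie.
Variable F : fieldType.

Inductive lequiv : lterm F -> lterm F -> Prop :=
| leq_refl x : lequiv x x
| leq_sym x y : lequiv x y -> lequiv y x
| leq_trans x y w : lequiv x y -> lequiv y w -> lequiv x w
| leq_add x x' y y' : lequiv x x' -> lequiv y y' -> lequiv (LAdd x y) (LAdd x' y')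
| leq_scale c x x' : lequiv x x' -> lequiv (LScale c x) (LScale c x')
| leq_br x x' y y' : lequiv x x' -> lequiv y y' -> lequiv (LBr x y) (LBr x' y')
| leq_addA x y w : lequiv (LAdd x (LAdd y w)) (LAdd (LAdd x y) w)
| leq_addC x y : lequiv (LAdd x y) (LAdd y x)
| leq_add0 x : lequiv (LAdd L0 x) x
| leq_addN x : lequiv (LAdd x (LScale (-1) x)) L0
| leq_scale1 x : lequiv (LScale 1 x) x
| leq_scaleA c d x : lequiv (LScale c (LScale d x)) (LScale (c * d) x)
| leq_scaleDr c x y : lequiv (LScale c (LAdd x y)) (LAdd (LScale c x) (LScale c y))
| leq_scaleDl c d x : lequiv (LScale (c + d) x) (LAdd (LScale c x) (LScale d x))
| leq_brDl x y w : lequiv (LBr (LAdd x y) w) (LAdd (LBr x w) (LBr y w))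
| leq_brZl c x w : lequiv (LBr (LScale c x) w) (LScale c (LBr x w))
| leq_alt x : lequiv (LBr x x) L0
| leq_jacobi x y w :
    lequiv (LAdd (LAdd (LBr (LBr x y) w) (LBr (LBr y w) x)) (LBr (LBr w x) y)) L0.

(* Syntactically Z_2-homogeneous terms of degree d (every element of the
   homogeneous component L_d is represented by such a term). *)
Fixpoint homog (d : bool) (t : lterm F) : bool :=
  match t with
  | LY _ => ~~ d
  | LZ _ => d
  | L0 => true
  | LAdd a b => homog d a && homog d b
  | LScale _ a => homog d a
  | LBr a b => [|| homog false a && homog d b | homog true a && homog (~~ d) b]
  end.

(* Substitution y_i |-> sy i, z_i |-> sz i (a graded endomorphism when
   sy i are of degree 0 and sz i of degree 1). *)
Fixpoint lsubst (sy sz : nat -> lterm F) (t : lterm F) : lterm F :=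
  match t with
  | LY i => sy i
  | LZ i => sz i
  | L0 => L0
  | LAdd a b => LAdd (lsubst sy sz a) (lsubst sy sz b)
  | LScale c a => LScale c (lsubst sy sz a)
  | LBr a b => LBr (lsubst sy sz a) (lsubst sy sz b)
  end.

(* The T_{Z2}-ideal generated by S: smallest set containing S, which is a
   Lie ideal (closed under 0, +, scalars, brackets with arbitrary elements),
   is a union of lequiv-classes, and is stable under graded endomorphisms. *)
Inductive in_Tideal (S : lterm F -> Prop) : lterm F -> Prop :=
| ti_gen t : S t -> in_Tideal S t
| ti_0 : in_Tideal S L0
| ti_add a b : in_Tideal S a -> in_Tideal S b -> in_Tideal S (LAdd a b)
| ti_scale c a : in_Tideal S a -> in_Tideal S (LScale c a)
| ti_brl a b : in_Tideal S a -> in_Tideal S (LBr a b)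
| ti_brr a b : in_Tideal S b -> in_Tideal S (LBr a b)
| ti_equiv a b : in_Tideal S a -> lequiv a b -> in_Tideal S b
| ti_subst a sy sz : in_Tideal S a ->
    (forall i, homog false (sy i)) -> (forall i, homog true (sz i)) ->
    in_Tideal S (lsubst sy sz a).

Fixpoint leval (ey ez : nat -> 'M[F]_2) (t : lterm F) : 'M[F]_2 :=
  match t with
  | LY i => ey i
  | LZ i => ez i
  | L0 => 0
  | LAdd a b => leval ey ez a + leval ey ez b
  | LScale c a => c *: leval ey ez a
  | LBr a b => leval ey ez a *m leval ey ez b - leval ey ez b *m leval ey ez a
  end.

(* Graded identities of UT_2(F)^(-): degree-0 variables range over
   span(e11,e22), degree-1 variables over span(e12). *)
Definition UT2_identity (t : lterm F) : Prop :=
  forall ey ez : nat -> 'M[F]_2,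
    (forall i, ey i 0 1 = 0 /\ ey i 1 0 = 0) ->
    (forall i, ez i 0 0 = 0 /\ ez i 1 1 = 0 /\ ez i 1 0 = 0) ->
    leval ey ez t = 0.

End Lie.

(* [z, a_1 y_1, ..., a_n y_n] with z := z_0 and y_{i+1} := LY i. *)
Definition brk_iter {F : Type} (t : lterm F) (i k : nat) : lterm F :=
  iter k (fun u => LBr u (LY i)) t.

Fixpoint comm_from {F : Type} (t : lterm F) (i : nat) (a : seq nat) : lterm F :=
  match a with
  | [::] => t
  | k :: a' => comm_from (brk_iter t i k) i.+1 a'
  end.

Definition commB {F : Type} (a : seq nat) : lterm F := comm_from (LZ 0) 0 a.

Definition inB (a : seq nat) : bool := (0 < size a)%N && all (fun k => 0 < k)%N a.

Definition seq_le (a a' : seq nat) : Prop :=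
  exists phi : nat -> nat,
    (forall i j, (i < j)%N -> (j < size a)%N -> (phi i < phi j)%N) /\
    (forall i, (i < size a)%N -> (phi i < size a')%N /\ (nth 0 a i <= nth 0 a' (phi i))%N).

From Pilot Require Import Defs.
From mathcomp Require Import all_boot all_algebra zify ring.
Import GRing.Theory.

(* Renaming y_i to y_(phi i) in f, where phi embeds V_f into V_g, and then
   bracketing with the letters of g that are still missing, yields an element
   of the T-ideal of f whose letters are a permutation of those of g.  In
   UT_2(F)^(-) a bracket [z, y_(i_1), ..., y_(i_k)] with diagonal y's evaluates
   to the product of the scalars (y_(i_j))_22 - (y_(i_j))_11 times z, which does
   not depend on the order of the letters; so that element differs from g by a
   graded identity. *)

Definition commw {F : Type} (u : lterm F) (w : seq nat) : lterm F :=
  foldl (fun t i => LBr t (LY i)) u w.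

Fixpoint exp_word (a : seq nat) (i : nat) : seq nat :=
  if a is k :: a' then nseq k i ++ exp_word a' i.+1 else [::].

Section CommutatorWords.
Variable F : Type.
Implicit Types (u : lterm F) (w : seq nat).

Lemma commw_cat u w1 w2 : commw u (w1 ++ w2) = commw (commw u w1) w2.
Proof. exact: foldl_cat. Qed.

Lemma brk_iter_commw u i k : brk_iter u i k = commw u (nseq k i).
Proof. by rewrite /brk_iter /commw; elim: k u => [|k IHk] u //=; rewrite -IHk -iterSr. Qed.

Lemma comm_from_commw a u i : comm_from u i a = commw u (exp_word a i).
Proof. by elim: a u i => [|k a IHa] u i //=; rewrite IHa brk_iter_commw commw_cat. Qed.

Lemma commB_commw a : commB a = commw (@LZ F 0) (exp_word a 0).
Proof. exact: comm_from_commw. Qed.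

End CommutatorWords.

Lemma exp_word_cat a b i : exp_word (a ++ b) i = exp_word a i ++ exp_word b (i + size a).
Proof.
elim: a i => [|k a IHa] i /=; first by rewrite addn0.
by rewrite IHa catA addSnnS.
Qed.

Lemma exp_word_shift a i : exp_word a i = map (addn i) (exp_word a 0).
Proof.
elim: a i => [|k a IHa] i //=.
rewrite map_cat map_nseq addn0 IHa (IHa 1) -map_comp; congr (_ ++ _).
by apply: eq_map => x /=; lia.
Qed.

Lemma subseq_exp_word a b s (phi : nat -> nat) :
  (forall i j, (i < j < size a)%N -> (phi i < phi j)%N) ->
  (forall i, (i < size a)%N ->
     [/\ (s <= phi i)%N, (phi i < s + size b)%N & (nth 0 a i <= nth 0 b (phi i - s))%N]) ->
  subseq (map phi (exp_word a 0)) (exp_word b s).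
Proof.
elim: a b s phi => [|k a IHa] b s phi phi_incr phi_le /=; first exact: sub0seq.
have [s_le_phi0 phi0_lt k_le] := phi_le 0%N isT.
(* The first block y_(phi 0)^k goes into the block of b at position d; the rest
   of a is embedded into drop d.+1 b, whose letters start at phi 0 + 1. *)
set d := (phi 0%N - s)%N.
have d_lt : (d < size b)%N by rewrite /d; lia.
rewrite -(cat_take_drop d b) exp_word_cat (drop_nth 0 d_lt) /= size_take d_lt.
have -> : (s + d = phi 0%N)%N by rewrite /d; lia.
rewrite map_cat map_nseq -[X in subseq X _]cat0s.
apply: cat_subseq; first exact: sub0seq.
apply: cat_subseq; first by rewrite -(subnKC k_le) nseqD prefix_subseq.
rewrite (exp_word_shift a 1) -map_comp; apply: IHa => [i j ij|i i_lt /=]; first exact: phi_incr.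
have [_ phi_i_lt ai_le] := phi_le i.+1 i_lt.
have := phi_incr 0%N i.+1 i_lt.
rewrite nth_drop size_drop add1n /d => phi0_lt_phi_i.
split; [lia | lia |].
by have -> : ((phi 0%N - s).+1 + (phi i.+1 - (phi 0%N).+1) = phi i.+1 - s)%N by lia.
Qed.

Lemma seq_le_subseq_exp_word a b :
  seq_le a b -> exists phi, subseq (map phi (exp_word a 0)) (exp_word b 0).
Proof.
case=> phi [phi_incr phi_le]; exists phi.
apply: subseq_exp_word => [i j /andP[]|i /phi_le[]]; first exact: phi_incr.
by rewrite subn0.
Qed.

Local Open Scope ring_scope.

Section UT2.
Variable F : fieldType.

Definition strictly_upper (M : 'M[F]_2) := [/\ M 0 0 = 0, M 1 1 = 0 & M 1 0 = 0].

Lemma ord2P (i : 'I_2) : i = 0 \/ i = 1.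
Proof. by case: i => [[|[|//]] ?]; [left | right]; apply: val_inj. Qed.

Lemma commmx_strictly_upper_diag (M D : 'M[F]_2) :
  strictly_upper M -> D 0 1 = 0 -> D 1 0 = 0 ->
  M *m D - D *m M = (D 1 1 - D 0 0) *: M.
Proof.
case=> M00 M11 M10 D01 D10; apply/matrixP => i j.
rewrite !mxE !big_ord_recl !big_ord0.
have -> : lift ord0 ord0 = 1 :> 'I_2 by exact: val_inj.
have -> : ord0 = 0 :> 'I_2 by exact: val_inj.
by case: (ord2P i) (ord2P j) => -> [] ->; rewrite ?M00 ?M11 ?M10 ?D01 ?D10; ring.
Qed.

Lemma leval_commw (ey ez : nat -> 'M[F]_2) (u : lterm F) w :
  (forall i, ey i 0 1 = 0 /\ ey i 1 0 = 0) -> strictly_upper (leval ey ez u) ->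
  leval ey ez (commw u w) = (\prod_(k <- w) (ey k 1 1 - ey k 0 0)) *: leval ey ez u.
Proof.
move=> ey_diag; elim: w u => [|k w IHw] u u_upper; first by rewrite big_nil scale1r.
have [ey01 ey10] := ey_diag k.
have step : leval ey ez (LBr u (LY k)) = (ey k 1 1 - ey k 0 0) *: leval ey ez u.
  exact: commmx_strictly_upper_diag.
have step_upper : strictly_upper (leval ey ez (LBr u (LY k))).
  by rewrite step; case: u_upper => M00 M11 M10; split; rewrite mxE ?M00 ?M11 ?M10 mulr0.
by rewrite /= -/(commw _ _) IHw // step scalerA big_cons mulrC.
Qed.

Lemma UT2_identity_commw_perm i w w' :
  perm_eq w w' ->
  UT2_identity (LAdd (commw (LZ i) w) (LScale (-1) (commw (@LZ F i) w'))).
Proof.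
move=> perm_ww' ey ez ey_diag ez_upper /=.
have ez_i_upper : strictly_upper (ez i) by have [? [? ?]] := ez_upper i.
by rewrite !leval_commw // (perm_big _ perm_ww') scaleN1r subrr.
Qed.

End UT2.

Section TIdeal.
Variables (F : fieldType) (S : lterm F -> Prop).
Implicit Types (u v : lterm F) (sz : nat -> lterm F).

Lemma in_Tideal_commw u w : in_Tideal S u -> in_Tideal S (commw u w).
Proof. by elim: w u => [|k w IHw] u Su //=; apply/IHw/ti_brl. Qed.

Lemma lsubst_commw (phi : nat -> nat) sz u w :
  lsubst (fun i => LY (phi i)) sz (commw u w)
  = commw (lsubst (fun i => LY (phi i)) sz u) (map phi w).
Proof. by elim: w u => [|k w IHw] u //=. Qed.

Lemma in_Tideal_rename (phi : nat -> nat) u :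
  in_Tideal S u -> in_Tideal S (lsubst (fun i => LY (phi i)) (@LZ F) u).
Proof. by move=> Su; apply: ti_subst. Qed.

Lemma lequiv_addNK u v : lequiv (LAdd u (LAdd v (LScale (-1) u))) v.
Proof.
apply: Defs.leq_trans (Defs.leq_addA _ _ _) _.
apply: Defs.leq_trans (Defs.leq_add (Defs.leq_addC _ _) (Defs.leq_refl _)) _.
apply: Defs.leq_trans (Defs.leq_sym (Defs.leq_addA _ _ _)) _.
apply: Defs.leq_trans (Defs.leq_add (Defs.leq_refl _) (Defs.leq_addN _)) _.
exact: Defs.leq_trans (Defs.leq_addC _ _) (Defs.leq_add0 _).
Qed.

Lemma in_Tideal_of_sub u v :
  in_Tideal S u -> in_Tideal S (LAdd v (LScale (-1) u)) -> in_Tideal S v.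
Proof. by move=> Su Suv; apply: ti_equiv (ti_add Su Suv) (lequiv_addNK u v). Qed.

End TIdeal.

Theorem mainTheorem4 (F : fieldType)
  (F_infinite : forall s : seq F, exists x : F, x \notin s)
  (a a' : seq nat) :
  inB a -> inB a' -> seq_le a a' ->
  in_Tideal (fun t : lterm F => t = commB a \/ UT2_identity t) (commB a').
Proof.
move=> _ _ /seq_le_subseq_exp_word[phi /perm_to_subseq[r perm_r]].
pose f_renamed := lsubst (fun i => LY (phi i)) (@LZ F) (commB a).
apply: (@in_Tideal_of_sub _ _ (commw f_renamed r)).
  by apply/in_Tideal_commw/in_Tideal_rename/ti_gen; left.
apply: ti_gen; right.
rewrite /f_renamed !commB_commw lsubst_commw -commw_cat.
exact: UT2_identity_commw_perm.
Qed.
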